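(* Let $\mathcal{M}\subseteq\binom{[n]}{k}$ be a positroid with Grassmann necklace $(I_1,\dots,I_n)$ and decorated permutation $\pi^{:}=(\pi,col)$, and let $j\in[n]$ with $\pi(j)\ne j$. Let $\mathcal{M}':=\{H\in\mathcal{M}: j\in H\}$ and for each $a\in[n]$ let $K_a$ be the $\le_a$-minimal element of $\mathcal{M}'$ (in Gale order). Then for every $a\in[n]$: if $j\in I_a$ then $K_a=I_a$, and if $j\notin I_a$ then $$K_a=\bigl(I_a\setminus\{\max_a(I_a\setminus I_j)\}\bigr)\cup\{j\}.$$
   Context: Indices are taken modulo $n$; we identify $[n]$ with $\mathbb{Z}_n$. For $t\in[n]$, the total order $\le_t$ on $[n]$ is $t<_t t+1<_t\cdots<_t n<_t 1<_t\cdots<_t t-1$. For $A,B\in\binom{[n]}{k}$ with $A=\{i_1<_t\cdots<_t i_k\}$ and $B=\{j_1<_t\cdots<_t j_k\}$, write $A\le_t B$ (Gale order) iff $i_s\le_t j_s$ for all $s$. For $D\subseteq[n]$, $\max_a(D)$ is the largest element of $D$ in $\le_a$. A Grassmann necklace is a sequence $(I_1,\dots,I_n)$ of subsets of $[n]$ such that for each $i$: if $i\in I_i$ then $I_{i+1}=(I_i\setminus\{i\})\cup\{j'\}$ for some $j'\in[n]$, and if $i\notin I_i$ then $I_{i+1}=I_i$. A positroid is a set $\mathcal{M}\subseteq\binom{[n]}{k}$ for which there is a Grassmann necklace $(I_1,\dots,I_n)$ with $\mathcal{M}=\{H : H\ge_t I_t \text{ for all } t\in[n]\}$; then $I_t$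 is the $\le_t$-minimum of $\mathcal{M}$ and $(I_1,\dots,I_n)$ is called the Grassmann necklace of $\mathcal{M}$. A decorated permutation is a pair $(\pi,col)$ with $\pi\in S_n$ and $col$ a function from the fixed points of $\pi$ to $\{1,-1\}$. The necklace and decorated permutation correspond bijectively via: if $I_{i+1}=(I_i\setminus\{i\})\cup\{j'\}$ with $j'\ne i$ then $\pi(i)=j'$; if $I_{i+1}=I_i$ and $i\notin I_i$ then $\pi(i)=i$, $col(i)=1$; if $I_{i+1}=I_i$ and $i\in I_i$ then $\pi(i)=i$, $col(i)=-1$. Conversely $I_r=\{i\in[n] : i<_r\pi^{-1}(i)\text{ or }(\pi(i)=i\text{ and }col(i)=-1)\}$. *)

(* [n] is modelled by 'I_n = {0,...,n-1} (a relabelling of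
   {1,...,n}); "i+1 mod n" is ordS. *)
From mathcomp Require Import all_boot all_order.
Set Implicit Arguments. Unset Strict Implicit. Unset Printing Implicit Defensive.

Section Defs.
Variable n : nat.
Local Notation idx := 'I_n.

(* position of i in the cyclic order <=_t  (t has rank 0, t+1 rank 1, ...) *)
Definition crank (t i : idx) : nat := (i + n - t) %% n.

Definition cle (t i j : idx) : bool := crank t i <= crank t j.

Definition csorted (t : idx) (A : {set idx}) : seq idx := sort (cle t) (enum A).

Definition gale (t : idx) (A B : {set idx}) : bool :=
  all2 (cle t) (csorted t A) (csorted t B).

(* max_a(D) : the <=_a-largest element of D (default a if D is empty) *)
Definition cmax (a : idx) (D : {set idx}) : idx :=
  if [pick x in D | [forall y in D, cle a y x]] is Some x then x else a.

Definition is_necklace (k : nat) (I : idx -> {set idx}) : Prop :=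
  forall i : idx, #|I i| = k /\
    (if i \in I i then exists j' : idx, I (ordS i) = (I i :\ i) :|: [set j']
     else I (ordS i) = I i).

Definition positroid_of (k : nat) (I : idx -> {set idx}) : {set {set idx}} :=
  [set H : {set idx} | (#|H| == k) && [forall t, gale t (I t) H]].

Definition necklace_perm (I : idx -> {set idx}) (i : idx) : idx :=
  if [pick j' | (i \in I i) && (j' != i) && (I (ordS i) == (I i :\ i) :|: [set j'])]
  is Some j' then j' else i.

End Defs.

From mathcomp Require Import all_boot all_order zify.
Set Implicit Arguments. Unset Strict Implicit. Unset Printing Implicit Defensive.

(* The Gale order A <=_t B is recast as a family of threshold inequalities:
   for every p, B has at most as many elements as A of t-rank < p
   (equivalently A has at most as many as B of t-rank >= p).  All statements
   then become comparisons between such counts, which are established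
   elementwise.  The only property of necklaces used is persistence: an
   element of I_r belongs to every I_r' with r' weakly between r and x in the
   cyclic order starting at r; it yields that I_t is <=_t-below every I_a. *)

Section CyclicRank.
Variable n : nat.
Implicit Types t a r x y : 'I_n.

Lemma crankE t x : crank t x = if t <= x then x - t else x + n - t.
Proof.
rewrite /crank; have := ltn_ord t; have := ltn_ord x; case: (leqP t x) => tx *.
- by rewrite -addnBAC // modnDr modn_small //; lia.
- by rewrite modn_small //; lia.
Qed.

Lemma crank_lt t x : crank t x < n.
Proof. by rewrite crankE; have := ltn_ord t; have := ltn_ord x; case: ifP; lia. Qed.

Lemma crank_id t : crank t t = 0.
Proof. by rewrite crankE leqnn subnn. Qed.

Lemma crank_inj t : injective (crank t).
Proof.
move=> x y; rewrite !crankE => e; apply: ord_inj; move: e.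
by have := ltn_ord t; have := ltn_ord x; have := ltn_ord y; do 2 case: ifP; lia.
Qed.

Lemma crank_rebase a t x :
  crank a x = if crank t a <= crank t x then crank t x - crank t a
              else crank t x + n - crank t a.
Proof.
rewrite !crankE; have := ltn_ord t; have := ltn_ord x; have := ltn_ord a.
by do 4 case: ifP; lia.
Qed.

Lemma crank_iter r d : d < n -> crank r (iter d (@ordS n) r) = d.
Proof.
have iterE : val (iter d (@ordS n) r) = (r + d) %% n.
  elim: d => [|d IH] /=; first by rewrite addn0 modn_small.
  by rewrite IH -addn1 modnDml addn1 addnS.
move=> dn; rewrite crankE iterE; have rn := ltn_ord r.
case: (ltnP (r + d) n) => rdn.
- by rewrite modn_small //; case: ifP; lia.
- rewrite -(subnK rdn) modnDr modn_small; last by lia.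
  by case: ifP; lia.
Qed.

Lemma crank_window a j x p : p <= crank a j ->
  (p <= crank a x < crank a j) = (n - crank a j + p <= crank j x).
Proof.
move=> pj; rewrite (crank_rebase j a x); have := crank_lt a x; have := crank_lt a j.
by case: ifP; lia.
Qed.

Lemma crank_wrap t a x : crank t x < crank t a -> crank a t <= crank a x.
Proof.
rewrite (crank_rebase a t t) (crank_rebase a t x) crank_id.
by have := crank_lt t a; have := crank_lt t x; do 2 case: ifP; lia.
Qed.
End CyclicRank.

Lemma all2_map (T U : Type) (f : T -> U) (r : rel U) s1 s2 :
  all2 (relpre f r) s1 s2 = all2 r (map f s1) (map f s2).
Proof. by elim: s1 s2 => [|x s1 IH] [|y s2] //=; rewrite IH. Qed.

Lemma count_below_min (s : seq nat) p :
  {in s, forall z, p <= z} -> count (fun v => v < p) s = 0.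
Proof.
move=> pmin; apply/eqP; rewrite -leqn0 leqNgt -has_count.
by apply/hasPn => z /pmin; rewrite ltnNge => ->.
Qed.

Lemma all2_leq_count (s1 s2 : seq nat) :
  sorted leq s1 -> sorted leq s2 -> size s1 = size s2 ->
  all2 leq s1 s2 <-> forall p, count (fun v => v < p) s2 <= count (fun v => v < p) s1.
Proof.
elim: s1 s2 => [|x s1 IH] [|y s2] //= sx sy [sz].
have xmin := order_path_min leq_trans sx; have ymin := order_path_min leq_trans sy.
move/allP in xmin; move/allP in ymin.
have IHs := IH _ (path_sorted sx) (path_sorted sy) sz.
split.
- case/andP => xy /IHs le_tail p; apply: leq_add (le_tail p).
  by case: (ltnP y p) => // yp; rewrite (leq_ltn_trans xy yp).
- move=> le_count; have xy : x <= y.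
    case: (leqP x y) => // yx; have := le_count y.+1.
    rewrite ltnSn (@count_below_min s1 y.+1); first lia.
    by move=> z /xmin; apply: leq_trans.
  rewrite xy; apply/IHs => p; case: (ltnP y p) => yp.
  + by have := le_count p; rewrite yp (leq_ltn_trans xy yp) !add1n ltnS.
  + by rewrite count_below_min // => z /ymin; apply: leq_trans.
Qed.

Definition cnt n (A : {set 'I_n}) (P : pred 'I_n) : nat :=
  \sum_(x : 'I_n) ((x \in A) && P x).

Local Notation below t p := (fun x => crank t x < p).
Local Notation above t p := (fun x => p <= crank t x).

Section Counting.
Variable n : nat.
Implicit Types (A B : {set 'I_n}) (P Q : pred 'I_n) (t w : 'I_n).

Lemma cnt_count A P : count P (enum A) = cnt A P.
Proof.
rewrite -sum1_count big_enum_cond /= big_mkcond /cnt.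
by apply: eq_bigr => x _; case: (x \in A); case: (P x).
Qed.

Lemma cnt_ext A P Q : P =1 Q -> cnt A P = cnt A Q.
Proof. by move=> PQ; apply: eq_bigr => x _; rewrite PQ. Qed.

Lemma cnt_mono A B P Q :
  {in A, forall x, P x -> (x \in B) && Q x} -> cnt A P <= cnt B Q.
Proof.
move=> sub; apply: leq_sum => x _.
by case: (boolP (x \in A)) => // xA; case: (boolP (P x)) => //= /(sub x xA) ->.
Qed.

Lemma cnt_lt_witness A B P Q w :
  {in A, forall x, P x -> (x \in B) && Q x} ->
  ~~ ((w \in A) && P w) -> w \in B -> Q w -> cnt A P < cnt B Q.
Proof.
move=> sub wAP wB wQ.
rewrite /cnt [X in X < _](bigD1 w) // [X in _ < X](bigD1 w) //=.
rewrite (negbTE wAP) wB wQ add0n add1n ltnS; apply: leq_sum => x _.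
by case: (boolP (x \in A)) => // xA; case: (boolP (P x)) => //= /(sub x xA) ->.
Qed.

Lemma cnt_D1 A P w :
  cnt A P = ((w \in A) && P w) + cnt A (fun x => (x != w) && P x).
Proof.
rewrite /cnt (bigD1 w) //= [in RHS]big_mkcond /=; congr (_ + _).
rewrite [in RHS](bigD1 w) //= eqxx andbF add0n; apply: eq_bigr => x xw.
by rewrite xw.
Qed.

Lemma cnt_predT A : cnt A predT = #|A|.
Proof.
rewrite /cnt -sum1_card [RHS]big_mkcond /=; apply: eq_bigr => x _.
by rewrite andbT.
Qed.

Lemma cnt_below_above A t p : cnt A (below t p) + cnt A (above t p) = #|A|.
Proof.
rewrite /cnt -big_split -sum1_card [RHS]big_mkcond /=; apply: eq_bigr => x _.
by case: (x \in A); case: ltnP.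
Qed.

Lemma gale_below t A B : gale t A B <->
  #|A| = #|B| /\ forall p, cnt B (below t p) <= cnt A (below t p).
Proof.
have countE (C : {set 'I_n}) p : count (fun v => v < p) (sort leq (map (crank t) (enum C))) =
                  cnt C (below t p).
  by rewrite count_sort count_map cnt_count.
have sizeE (C : {set 'I_n}) : size (sort leq (map (crank t) (enum C))) = #|C|.
  by rewrite size_sort size_map cardE.
have sortedE (C : {set 'I_n}) : sorted leq (sort leq (map (crank t) (enum C))).
  exact: sort_sorted leq_total _.
have crit := all2_leq_count (sortedE A) (sortedE B); rewrite !sizeE in crit.
rewrite /gale /csorted (_ : cle t = relpre (crank t) leq) // all2_map -!sort_map.
split => [galeAB | [cardAB le_count]].
- have cardAB : #|A| = #|B|.
    by rewrite -!sizeE; move: galeAB; rewrite all2E => /andP[/eqP].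
  by split=> // p; rewrite -!countE; apply: (crit cardAB).1.
- by apply/(crit cardAB) => p; rewrite !countE.
Qed.

Lemma gale_above t A B : gale t A B <->
  #|A| = #|B| /\ forall p, cnt A (above t p) <= cnt B (above t p).
Proof.
rewrite gale_below; split=> -[cardAB le_count]; split=> // p; have := le_count p;
  have := cnt_below_above A t p; have := cnt_below_above B t p; lia.
Qed.

Lemma gale_below_le t A B :
  gale t A B -> forall p, cnt B (below t p) <= cnt A (below t p).
Proof. by case/gale_below. Qed.

Lemma gale_above_le t A B :
  gale t A B -> forall p, cnt A (above t p) <= cnt B (above t p).
Proof. by case/gale_above. Qed.

Lemma cnt_above_split A t w p : p <= crank t w ->
  cnt A (above t p) =
  cnt A (fun x => p <= crank t x < crank t w) + (w \in A) + cnt A (above t (crank t w).+1).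
Proof.
move=> pw; rewrite (cnt_D1 _ _ w) pw andbT addnC addnAC; congr (_ + _).
rewrite /cnt -big_split; apply: eq_bigr => x _ /=.
rewrite -(inj_eq (@crank_inj _ t)).
by case: (x \in A) => //=; case: eqP; lia.
Qed.
End Counting.

Section Necklace.
Variables (n k : nat) (I : 'I_n -> {set 'I_n}).
Hypothesis neckI : is_necklace k I.

Lemma necklace_card i : #|I i| = k.
Proof. by case: (neckI i). Qed.

Lemma necklace_step s x : x \in I s -> x != s -> x \in I (ordS s).
Proof.
move=> xs xNs; case: (neckI s) => _; case: ifP => _; last by move=> ->.
by case=> j' ->; rewrite in_setU in_setD1 xNs xs.
Qed.

Lemma necklace_persist r r' x : x \in I r -> crank r r' <= crank r x -> x \in I r'.
Proof.
move=> xr rx.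
have persist d : d <= crank r x -> x \in I (iter d (@ordS n) r).
  elim: d => [|d IH] // dx; have dn := leq_ltn_trans dx (crank_lt r x).
  apply: necklace_step; first exact/IH/ltnW.
  apply: contraTneq dx => ->; change (~~ (d < crank r (iter d (@ordS n) r))).
  by rewrite crank_iter ?ltnn // ltnW.
have -> : r' = iter (crank r r') (@ordS n) r.
  by apply: (@crank_inj _ r); rewrite crank_iter // crank_lt.
exact: persist.
Qed.

Lemma necklace_gale t a : gale t (I t) (I a).
Proof.
apply/gale_above; split=> [|p]; first by rewrite !necklace_card.
case: (leqP (crank t a) p) => ap.
- apply: cnt_mono => x xt px; rewrite px andbT.
  by apply: necklace_persist xt _; apply: leq_trans px.
- suff: cnt (I a) (below t p) <= cnt (I t) (below t p).
    have := cnt_below_above (I a) t p; have := cnt_below_above (I t) t p.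
    by rewrite !necklace_card; lia.
  apply: cnt_mono => x xa xp; rewrite xp andbT.
  by apply: necklace_persist xa _; apply: crank_wrap; exact: ltn_trans xp ap.
Qed.
End Necklace.

Lemma necklace_perm_moved n (I : 'I_n -> {set 'I_n}) j :
  necklace_perm I j != j -> j \in I j.
Proof.
rewrite /necklace_perm; case: pickP => [j' /andP [/andP [] //] | _].
by rewrite eqxx.
Qed.

Lemma cmaxP n (a : 'I_n) (D : {set 'I_n}) :
  D != set0 -> cmax a D \in D /\ {in D, forall y, crank a y <= crank a (cmax a D)}.
Proof.
case/set0Pn => x0 x0D; rewrite /cmax; case: pickP => [x /andP [xD /forall_inP xmax] | none].
- by split=> // y /xmax.
- case: (@arg_maxnP _ x0 (fun x => x \in D) (crank a) x0D) => x xD xmax.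
  by move: (none x); rewrite xD /=; move/negbT/forall_inPn => -[y /xmax yD /negP].
Qed.

Section Exchange.
Variables (n k : nat) (I : 'I_n -> {set 'I_n}) (j a m : 'I_n).
Hypotheses (neckI : is_necklace k I) (j_Ij : j \in I j) (j_Ia : j \notin I a)
  (m_Ia : m \in I a) (m_Ij : m \notin I j)
  (m_max : {in I a, forall y, y \notin I j -> crank a y <= crank a m}).

Let K := (I a :\ m) :|: [set j].

Lemma cnt_exchange P : cnt K P + P m = cnt (I a) P + P j.
Proof.
rewrite (cnt_D1 K P j) (cnt_D1 (I a) P m) /K !inE eqxx orbT m_Ia /=.
suff -> : cnt ((I a :\ m) :|: [set j]) (fun x => (x != j) && P x) =
          cnt (I a) (fun x => (x != m) && P x) by rewrite -addnA addnC (addnC (P m)).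
apply: eq_bigr => x _; rewrite !inE; case: (x =P j) => [-> | _] /=.
  by rewrite (negbTE j_Ia) andbF.
by rewrite orbF; case: (x \in I a); case: (x != m).
Qed.

Lemma card_exchange : #|K| = k.
Proof.
by have := cnt_exchange predT; rewrite !cnt_predT (necklace_card neckI) => /addIn.
Qed.

(* m precedes j from a, since otherwise persistence would put m in I_j. *)
Lemma crank_m_lt_j : crank a m < crank a j.
Proof.
rewrite ltnNge; apply/negP => jm.
by move: m_Ij; rewrite (necklace_persist neckI m_Ia jm).
Qed.

(* Where K improves on I_a in the t-order (j before the threshold, m after
   it), I_a is strictly above I_t, so K stays weakly above I_t. *)
Lemma exchange_gap t p : crank t j < p <= crank t m ->
  cnt (I a) (below t p) < cnt (I t) (below t p).
Proof.
case/andP=> jp pm; case: (leqP (crank t a) p) => ap.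
- have m_It : m \notin I t.
    apply/negP => m_It; move: m_Ij.
    by rewrite (necklace_persist neckI m_It (ltnW (leq_trans jp pm))).
  suff: cnt (I t) (above t p) < cnt (I a) (above t p).
    have := cnt_below_above (I a) t p; have := cnt_below_above (I t) t p.
    by rewrite !(necklace_card neckI); lia.
  apply: (@cnt_lt_witness _ _ _ _ _ m) => [x xt px | | // | //].
  + by rewrite px andbT (necklace_persist neckI xt (leq_trans ap px)).
  + by rewrite (negbTE m_It).
- apply: (leq_trans _ (gale_below_le (necklace_gale neckI t j) p)).
  apply: (@cnt_lt_witness _ _ _ _ _ j) => [x xa xp | | // | //].
  + rewrite xp andbT; apply: contraT => x_Ij; exfalso.
    have := m_max xa x_Ij; have := crank_m_lt_j.
    rewrite !(crank_rebase a t); have := crank_lt t m.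
    by do 3 case: ifP; lia.
  + by rewrite (negbTE j_Ia).
Qed.

Lemma exchange_above_necklace t : gale t (I t) K.
Proof.
apply/gale_below; split=> [|p]; first by rewrite card_exchange (necklace_card neckI).
have := cnt_exchange (below t p); have := @exchange_gap t p.
have := gale_below_le (necklace_gale neckI t a) p.
by case: (ltnP (crank t j) p); case: (ltnP (crank t m) p) => /=; lia.
Qed.

(* K is <=_a-below every basis containing j: compare I_a and H separately on
   the window [p, crank a j) (through I_j, using the j-order) and on the
   tail beyond j (through the a-order), j itself being the extra element. *)
Lemma exchange_below_basis (H : {set 'I_n}) : #|H| = k -> j \in H ->
  gale a (I a) H -> gale j (I j) H -> gale a K H.
Proof.
move=> cardH j_H aH jH; apply/gale_above; split=> [|p]; first by rewrite card_exchange.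
have := cnt_exchange (above a p); have := gale_above_le aH p.
case: (leqP p (crank a j)) => /= pj; last lia.
case: (leqP p (crank a m)) => /= pm; first lia.
suff : cnt (I a) (above a p) < cnt H (above a p) by lia.
pose window x := p <= crank a x < crank a j.
have window_in_Ij : cnt (I a) window <= cnt (I j) window.
  apply: cnt_mono => x xa wx; rewrite wx andbT; apply: contraT => x_Ij; exfalso.
  by have := m_max xa x_Ij; move: wx pm; rewrite /window; lia.
have Ij_window_H : cnt (I j) window <= cnt H window.
  rewrite /window !(cnt_ext _ (fun x => crank_window x pj)).
  exact: gale_above_le jH _.
have tail := gale_above_le aH (crank a j).+1.
rewrite (cnt_above_split (I a) pj) (cnt_above_split H pj) (negbTE j_Ia) j_H.
by move: window_in_Ij Ij_window_H; rewrite /window; lia.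
Qed.
End Exchange.

Theorem mainTheorem2 (n k : nat) (I : 'I_n -> {set 'I_n})
  (M : {set {set 'I_n}}) (j : 'I_n) :
  is_necklace k I ->
  M = positroid_of k I ->
  necklace_perm I j != j ->
  forall a : 'I_n,
    let M' := [set H in M | j \in H] in
    let K := if j \in I a then I a
             else (I a :\ cmax a (I a :\: I j)) :|: [set j] in
    K \in M' /\ (forall H, H \in M' -> gale a K H).
Proof.
move=> neckI -> moved a M' K; have j_Ij := necklace_perm_moved moved.
have inM' H : (H \in M') = [&& #|H| == k, [forall t, gale t (I t) H] & j \in H].
  by rewrite !inE andbA.
rewrite /K; case: ifP => [j_Ia | /negbT j_Ia].
  split=> [|H]; last by rewrite inM' => /and3P [_ /forallP].
  rewrite inM' (necklace_card neckI) eqxx j_Ia andbT.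
  by apply/forallP => t; apply: necklace_gale neckI t a.
have D0 : I a :\: I j != set0.
  apply: contraNneq j_Ia => /eqP; rewrite setD_eq0 => sub_aj.
  suff -> : I a = I j by [].
  by apply/eqP; rewrite eqEcard sub_aj !(necklace_card neckI) leqnn.
have [] := cmaxP a D0; set m := cmax a _; rewrite inE => /andP [m_Ij m_Ia] m_max.
have {}m_max : {in I a, forall y, y \notin I j -> crank a y <= crank a m}.
  by move=> y ya yj; apply: m_max; rewrite inE yj ya.
split=> [|H].
- rewrite inM' !inE eqxx orbT andbT (card_exchange neckI j_Ia m_Ia) eqxx /=.
  by apply/forallP => t; apply: exchange_above_necklace.
- rewrite inM' => /and3P [/eqP cardH /forallP galeH j_H].
  by apply: exchange_below_basis.
Qed.
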